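(* Let $G=(V,E)$ be a network, $s,t\in V$, and $B$ any bound. Let $L^{(s,t)}$ be the set of weight-shortest paths from $s$ to $t$, and let $\mathbb{L}=\bigcap_{\pi\in L^{(s,t)}}\pi$ be the set of in-all-weight-shortest-paths links. Then every survivable connection $(\pi_1,\pi_2)$ that is an optimal solution of the CT-Constrained QoS Max-Survivability problem with bound $B$ satisfies $\mathbb{C}(\pi_1,\pi_2)\subseteq\mathbb{L}$.
   Context: A network is a directed graph $G=(V,E)$, $N=|V|$, $M=|E|$. Each link $e$ has a failure probability $p_e\in(0,p_{max}]$ with $p_{max}<1$, and a positive weight $w_e$. Paths are identified with their sets of links. $P^{(s,t)}$ is the set of simple paths from $s$ to $t$. A survivable connection from $s$ to $t$ is a pair $(\pi_1,\pi_2)\in P^{(s,t)}\times P^{(s,t)}$; the two paths may coincide. Its critical links are $\mathbb{C}(\pi_1,\pi_2)=\pi_1\cap\pi_2$. Its survivability level is $\prod_{e\in\pi_1\cap\pi_2}(1-p_e)$, which equals $1$ if there are no critical links. The weight of a path is $W(\pi)=\sum_{e\in\pi}w_e$. A weight-shortest path from $u$ to $v$ is a path from $u$ to $v$ of minimum weight. The CT-weight of a connection is $W_{CT}(\pi_1,\pi_2)=W(\pi_1)+W(\pi_2)$. CT-Constrained QoS Max-Survivability (CT-CQMS) problem: given $G$, $s$, $t$ and a bound $B$, find a survivable connection $(\pi_1,\pi_2)$ from $s$ to $t$ maximizing $\prod_{e\in\pi_1\cap\pi_2}(1-p_e)$ subject to $W_{CT}(\pi_1,\pi_2)\le B$. 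*)

From HB Require Import structures.
From mathcomp Require Import all_boot all_order all_algebra.
Set Implicit Arguments. Unset Strict Implicit. Unset Printing Implicit Defensive.
Import Order.TTheory GRing.Theory Num.Theory.
Local Open Scope ring_scope.

(* A path from s is a vertex sequence s :: q; its links are the consecutive
   pairs. *)

Definition links {V : finType} (s : V) (q : seq V) : {set V * V} :=
  [set e in zip (s :: q) q].

Definition simple_path {V : finType} (adj : rel V) (s t : V) (q : seq V) : bool :=
  [&& path adj s q, last s q == t & uniq (s :: q)].

Definition pweight {R : numDomainType} {V : finType} (w : V * V -> R)
  (s : V) (q : seq V) : R := \sum_(e in links s q) w e.

Definition critical {V : finType} (s : V) (q1 q2 : seq V) : {set V * V} :=
  links s q1 :&: links s q2.

Definition surv {R : numDomainType} {V : finType} (p : V * V -> R)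
  (s : V) (q1 q2 : seq V) : R := \prod_(e in critical s q1 q2) (1 - p e).

Definition ct_weight {R : numDomainType} {V : finType} (w : V * V -> R)
  (s : V) (q1 q2 : seq V) : R := pweight w s q1 + pweight w s q2.

Definition weight_shortest {R : numDomainType} {V : finType} (adj : rel V)
  (w : V * V -> R) (s t : V) (q : seq V) : Prop :=
  simple_path adj s t q /\
  forall q', simple_path adj s t q' -> pweight w s q <= pweight w s q'.

Definition ct_feasible {R : numDomainType} {V : finType} (adj : rel V)
  (w : V * V -> R) (s t : V) (B : R) (q1 q2 : seq V) : Prop :=
  [/\ simple_path adj s t q1, simple_path adj s t q2 & ct_weight w s q1 q2 <= B].

Definition ct_cqms_optimal {R : numDomainType} {V : finType} (adj : rel V)
  (p w : V * V -> R) (s t : V) (B : R) (q1 q2 : seq V) : Prop :=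
  ct_feasible adj w s t B q1 q2 /\
  forall r1 r2, ct_feasible adj w s t B r1 r2 -> surv p s r1 r2 <= surv p s q1 q2.

Definition in_all_shortest {R : numDomainType} {V : finType} (adj : rel V)
  (w : V * V -> R) (s t : V) (e : V * V) : Prop :=
  forall q, weight_shortest adj w s t q -> e \in links s q.

From HB Require Import structures.
From mathcomp Require Import all_boot all_order all_algebra.
From mathcomp Require Import ring lra.
Import Order.TTheory GRing.Theory Num.Theory.
Set Implicit Arguments. Unset Strict Implicit. Unset Printing Implicit Defensive.
Local Open Scope ring_scope.

(* Suppose a critical link e = (u, v) of an optimal connection (q1, q2) misses a
   weight-shortest s-t path l, and split q_b = A_b e C_b at e.  Walking along l, let y
   be the first vertex on some C_j and x the last vertex on some A_i before y.  The
   segment m of l from x to y uses no link of q1 or q2 (it avoids e, and its links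
   start off every C and end off every A), and as l is shortest, m is no heavier than
   the detour from x along A_i, through e, and along C_j to y.  Replacing that detour
   by m in the walk A_i e C_j and pairing the result with A_(not i) e C_(not j) gives
   two s-t walks of total weight at most W(q1) + W(q2) whose common links are critical
   links of (q1, q2) other than e: a common link lies on halves of both paths, since
   the two halves of a simple path share no link.  Removing cycles gives a feasible
   connection whose critical links are a proper subset of those of (q1, q2); as every
   p_e > 0, its survivability is strictly larger, contradicting optimality. *)

Section Splitting.

Variable T : eqType.
Implicit Types (x : T) (p : seq T).

Lemma split_at_mem x p z : z \in x :: p -> exists p1 p2, p = p1 ++ p2 /\ last x p1 = z.
Proof. by case/splitPl=> p1 p2 <-; exists p1, p2. Qed.

Lemma split_at_first (P : pred T) x p : P (last x p) ->
  exists p1 p2, [/\ p = p1 ++ p2, P (last x p1) & all (predC P) (belast x p1)].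
Proof.
elim: p x => [|y p IH] x hP; first by exists [::], [::].
case Px: (P x); first by exists [::], (y :: p).
have [p1 [p2 [-> Pl hall]]] := IH y hP.
by exists (y :: p1), p2; rewrite /= Px.
Qed.

Lemma split_at_last (P : pred T) x p : P x ->
  exists p1 p2, [/\ p = p1 ++ p2, P (last x p1) & all (predC P) p2].
Proof.
move=> Px; elim/last_ind: p => [|p y [p1 [p2 [-> Pl hall]]]]; first by exists [::], [::].
case Py: (P y); first by exists (rcons (p1 ++ p2) y), [::]; rewrite cats0 last_rcons.
by exists p1, (rcons p2 y); rewrite rcons_cat all_rcons /= Py.
Qed.

Lemma path_splice (e : rel T) x p1 m m' p2 :
  path e x (p1 ++ m' ++ p2) -> path e (last x p1) m ->
  last (last x p1) m = last (last x p1) m' ->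
  path e x (p1 ++ m ++ p2) /\ last x (p1 ++ m ++ p2) = last x (p1 ++ m' ++ p2).
Proof.
rewrite !cat_path => /and3P [p1P _ p2P] mP lm.
by rewrite !last_cat lm p1P mP p2P.
Qed.

End Splitting.

Section Links.

Variable V : finType.
Implicit Types (x y : V) (p : seq V).

Lemma links_cons x y p : links x (y :: p) = (x, y) |: links y p.
Proof. by apply/setP => f; rewrite !inE. Qed.

Lemma links_cat x p1 p2 :
  links x (p1 ++ p2) = links x p1 :|: links (last x p1) p2.
Proof.
apply/setP => f; rewrite !inE -mem_cat; congr (f \in _).
by elim: p1 x => [|y p1 IH] x //=; rewrite IH.
Qed.

Lemma links_cat3 x p1 m p2 :
  links x (p1 ++ m ++ p2) =
  links x p1 :|: links (last x p1) m :|: links (last (last x p1) m) p2.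
Proof. by rewrite links_cat links_cat setUA. Qed.

Lemma mem_links x p f : f \in links x p -> f.1 \in belast x p /\ f.2 \in p.
Proof.
elim: p x => [|y p IH] x; first by rewrite inE.
rewrite links_cons in_setU1 => /orP [/eqP -> | /IH [h1 h2]] /=.
  by rewrite !inE !eqxx.
by rewrite !inE h1 h2 !orbT.
Qed.

Lemma links_path (adj : rel V) x p f : path adj x p -> f \in links x p -> adj f.1 f.2.
Proof.
elim: p x => [|y p IH] x; first by rewrite inE.
by rewrite links_cons in_setU1 /= => /andP [hxy hp] /orP [/eqP -> // | /(IH _ hp)].
Qed.

Lemma links_split x p u v : (u, v) \in links x p ->
  exists2 p1, last x p1 = u & exists p2, p = p1 ++ v :: p2.
Proof.
elim: p x => [|y p IH] x; first by rewrite inE.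
rewrite links_cons in_setU1 => /orP [/eqP [-> ->] | /IH [p1 <- [p2 ->]]].
  by exists [::]; last exists p.
by exists (y :: p1); last exists p2.
Qed.

Lemma segment_between (X Y : pred V) x p : X x -> Y (last x p) ->
  exists p1 m p2, [/\ p = p1 ++ m ++ p2, X (last x p1), Y (last (last x p1) m)
    & forall f, f \in links (last x p1) m -> ~~ Y f.1 /\ ~~ X f.2].
Proof.
move=> Xx Yl; have [m0 [p2 [-> Ym0 notY]]] := split_at_first Yl.
have [p1 [m [em0 Xp1 notX]]] := split_at_last m0 Xx.
exists p1, m, p2; rewrite em0 -catA; split=> //; first by rewrite -last_cat -em0.
move=> f /mem_links [f1 f2]; split; last exact: (allP notX).
by apply: (allP notY); rewrite em0 belast_cat mem_cat f1 orbT.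
Qed.

End Links.

Section WalkWeight.

Variables (R : numDomainType) (V : finType) (adj : rel V) (w : V * V -> R).
Hypothesis w_ge0 : forall x y, adj x y -> 0 <= w (x, y).
Implicit Types (x y : V) (p : seq V).

(* Unlike [pweight], a link counts as often as the walk traverses it, which makes the
   weight additive under concatenation. *)
Definition walk_weight x p : R := \sum_(f <- zip (x :: p) p) w f.

Lemma walk_weight_cons x y p : walk_weight x (y :: p) = w (x, y) + walk_weight y p.
Proof. by rewrite /walk_weight /= big_cons. Qed.

Lemma walk_weight_cat x p1 p2 :
  walk_weight x (p1 ++ p2) = walk_weight x p1 + walk_weight (last x p1) p2.
Proof.
elim: p1 x => [|y p1 IH] x; first by rewrite /walk_weight big_nil add0r.
by rewrite cat_cons !walk_weight_cons IH addrA.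
Qed.

Lemma walk_weight_cat3 x p1 m p2 :
  walk_weight x (p1 ++ m ++ p2) =
  walk_weight x p1 + walk_weight (last x p1) m + walk_weight (last (last x p1) m) p2.
Proof. by rewrite !walk_weight_cat addrA. Qed.

Lemma walk_weight_ge0 x p : path adj x p -> 0 <= walk_weight x p.
Proof.
elim: p x => [|y p IH] x /=; first by rewrite /walk_weight big_nil.
by case/andP=> hxy hp; rewrite walk_weight_cons addr_ge0 ?w_ge0 ?IH.
Qed.

Lemma pweight_uniq x p : uniq (x :: p) -> pweight w x p = walk_weight x p.
Proof.
move=> /(zip_uniql p) hzip; rewrite /walk_weight big_uniq //.
by apply: eq_bigl => f; rewrite inE.
Qed.

Lemma shortcut x p : path adj x p -> exists p',
  [/\ path adj x p', last x p' = last x p, uniq (x :: p'),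
      links x p' \subset links x p & walk_weight x p' <= walk_weight x p].
Proof.
elim/last_ind: p => [|p y IH]; first by exists [::].
rewrite -cats1 cat_path /= andbT => /andP [hp hy].
have [p' [hp' lastp' up' sub' le'] ] := IH hp.
have sub_p : links x p \subset links x (p ++ [:: y]) by rewrite links_cat subsetUl.
have le_p : walk_weight x p <= walk_weight x (p ++ [:: y]).
  by rewrite walk_weight_cat lerDl walk_weight_ge0 //= hy.
case yp': (y \in x :: p').
  case/splitPl: yp' hp' up' sub' le' => p1 p2 lastp1 hp12 up12 sub12 le12.
  have [hp1 hp2] : path adj x p1 /\ path adj y p2.
    by apply/andP; move: hp12; rewrite cat_path lastp1.
  have up1 : uniq (x :: p1) by move: up12; rewrite -cat_cons cat_uniq => /andP [].
  exists p1; split=> //; first by rewrite last_cat.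
    by rewrite (subset_trans _ sub_p) // (subset_trans _ sub12) // links_cat subsetUl.
  rewrite (le_trans _ le_p) // (le_trans _ le12) // walk_weight_cat lerDl.
  by rewrite lastp1 walk_weight_ge0.
exists (p' ++ [:: y]); split.
- by rewrite cat_path hp' lastp' /= hy.
- by rewrite !last_cat.
- by rewrite -[_ && _]/(uniq (x :: p' ++ [:: y])) cats1 -rcons_cons rcons_uniq yp'.
- by rewrite !links_cat lastp' setSU.
- by rewrite !walk_weight_cat lastp' lerD2r.
Qed.

Lemma shortest_walk s t l : weight_shortest adj w s t l ->
  forall l', path adj s l' -> last s l' = t -> walk_weight s l <= walk_weight s l'.
Proof.
move=> [/and3P [_ _ ul] lmin] l' hl' lastl'.
have [l'' [hl'' lastl'' ul'' _ le'']] := shortcut hl'.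
have simple'' : simple_path adj s t l''.
  by rewrite /simple_path hl'' ul'' lastl'' lastl' eqxx.
by rewrite -pweight_uniq // (le_trans (lmin _ simple'')) // pweight_uniq.
Qed.

End WalkWeight.

Lemma crossed_links_meet (T : finType) (A C : bool -> {set T}) (M : {set T}) (e : T)
    (i j : bool) :
  (forall b, [disjoint A b & C b]) ->
  (forall b, e \notin A b :|: C b) ->
  (forall b, [disjoint M & A b :|: (e |: C b)]) ->
  (A i :|: M :|: C j) :&: (A (~~ i) :|: (e |: C (~~ j)))
    \subset (A true :|: (e |: C true)) :&: (A false :|: (e |: C false)) :\ e.
Proof.
move=> dAC eAC dM; apply/subsetP => f.
have nAC b : ~~ ((f \in A b) && (f \in C b)).
  by apply/andP => -[fA]; rewrite (disjointFr (dAC b) fA).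
have nM b : ~~ ((f \in M) && (f \in A b :|: (e |: C b))).
  by apply/andP => -[fM]; rewrite (disjointFr (dM b) fM).
have fe : f == e ->
    ~~ ((f \in A true) || (f \in C true)) && ~~ ((f \in A false) || (f \in C false)).
  by move/eqP ->; rewrite -!in_setU !eAC.
move: (nAC true) (nAC false) (nM true) (nM false) fe; rewrite !inE.
case: i j => [] [];
  move: (f == e) (f \in M) (f \in A true) (f \in A false) (f \in C true) (f \in C false);
  by case; case; case; case; case; case.
Qed.

Section Crossing.

Variables (R : numDomainType) (V : finType) (adj : rel V) (w : V * V -> R).

(* The paths q_b = a b ++ v :: c b, for b : bool, both use the link (u, v); the walk
   a i ++ v :: c j combines the first half of q_i with the second half of q_j. *)
Variables (s t u v : V) (a c : bool -> seq V).
Hypothesis simple_halves : forall b, simple_path adj s t (a b ++ v :: c b).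
Hypothesis last_a : forall b, last s (a b) = u.

Local Notation W := (walk_weight w).

Lemma halves_path b : [/\ path adj s (a b), adj u v, path adj v (c b) & last v (c b) = t].
Proof.
have /and3P [] := simple_halves b.
by rewrite cat_path last_cat last_a /= => /and3P [-> -> ->] /eqP.
Qed.

Lemma halves_disjoint b z : z \in s :: a b -> z \in v :: c b -> False.
Proof.
have /and3P [_ _] := simple_halves b.
by rewrite -cat_cons cat_uniq => /and3P [_ /hasPn disj _] za /disj; rewrite za.
Qed.

Lemma links_crossed i j :
  links s (a i ++ v :: c j) = links s (a i) :|: ((u, v) |: links v (c j)).
Proof. by rewrite links_cat last_a links_cons. Qed.

Lemma crossed_walk i j : path adj s (a i ++ v :: c j) /\ last s (a i ++ v :: c j) = t.
Proof.
have [pai uv _ _] := halves_path i; have [_ _ pcj lcj] := halves_path j.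
by rewrite cat_path last_cat last_a /= pai uv pcj.
Qed.

Lemma walk_weight_crossed_swap i j :
  W s (a i ++ v :: c j) + W s (a (~~ i) ++ v :: c (~~ j)) =
  W s (a true ++ v :: c true) + W s (a false ++ v :: c false).
Proof.
rewrite !walk_weight_cat !last_a !walk_weight_cons.
by case: i; case: j => //=; ring.
Qed.

Lemma halves_links_disjoint b : [disjoint links s (a b) & links v (c b)].
Proof.
rewrite disjoint_subset; apply/subsetP => f /mem_links [_ fa]; rewrite inE.
apply/negP => /mem_links [_ fc].
by apply: (halves_disjoint (b := b) (z := f.2)); rewrite inE ?fa ?fc orbT.
Qed.

Lemma link_notin_halves b : (u, v) \notin links s (a b) :|: links v (c b).
Proof.
rewrite in_setU negb_or; apply/andP; split; apply/negP => /mem_links [/= hu hv].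
  by apply: (halves_disjoint (b := b) (z := v)); rewrite !inE ?hv ?eqxx ?orbT.
apply: (halves_disjoint (b := b) (z := u)); first by rewrite -(last_a b) mem_last.
exact: mem_belast hu.
Qed.

Lemma detour_walk i j a' a'' c' c'' : a i = a' ++ a'' -> c j = c' ++ c'' ->
  path adj (last s a') (a'' ++ v :: c') /\ last (last s a') (a'' ++ v :: c') = last v c'.
Proof.
move=> ea ec; have [pai uv _ _] := halves_path i; have [_ _ pcj _] := halves_path j.
have la := last_a i; rewrite ea last_cat in la.
move: pai pcj; rewrite ea ec !cat_path => /andP [_ pa''] /andP [pc' _].
by rewrite last_cat la /= uv pa'' pc'.
Qed.

Lemma reroute_crossed i j a' a'' c' c'' m :
  a i = a' ++ a'' -> c j = c' ++ c'' ->
  path adj (last s a') m -> last (last s a') m = last v c' ->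
  W (last s a') m <= W (last s a') (a'' ++ v :: c') ->
  [/\ path adj s (a' ++ m ++ c''), last s (a' ++ m ++ c'') = t,
      links s (a' ++ m ++ c'') \subset
        links s (a i) :|: links (last s a') m :|: links v (c j)
    & W s (a' ++ m ++ c'') <= W s (a i ++ v :: c j)].
Proof.
move=> ea ec pm lm le_m; have [_ ldet] := detour_walk ea ec.
have ecw : a i ++ v :: c j = a' ++ (a'' ++ v :: c') ++ c'' by rewrite ea ec -!catA.
have [pcw lcw] := crossed_walk i j; rewrite ecw in pcw lcw *.
have [pr1 lr1] := path_splice pcw pm (etrans lm (esym ldet)).
split=> //; first by rewrite lr1.
  rewrite links_cat3 lm ea ec !links_cat; apply/subsetP => f.
  by rewrite !inE => /orP [/orP [] | ] ->; rewrite ?orbT.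
by rewrite !walk_weight_cat3 lm ldet lerD2r lerD2l.
Qed.

Let X := [pred z | [exists b, z \in s :: a b]].
Let Y := [pred z | [exists b, z \in v :: c b]].

Lemma links_between_avoid_halves (M : {set V * V}) b :
  (forall f, f \in M -> ~~ Y f.1 /\ ~~ X f.2) -> (u, v) \notin M ->
  [disjoint M & links s (a b ++ v :: c b)].
Proof.
move=> hM eM; rewrite disjoint_subset; apply/subsetP => f fM; rewrite inE.
have [/existsPn notY /existsPn notX] := hM f fM.
rewrite links_crossed in_setU in_setU1; apply/negP.
case/or3P=> [/mem_links [_ fa] | /eqP ef | /mem_links [fc _]].
- by move: (notX b); rewrite inE fa orbT.
- by move: eM; rewrite -ef fM.
- by move: (notY b); rewrite (mem_belast fc).
Qed.

Lemma crossing_bypass l :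
  path adj s l -> last s l = t ->
  (forall l', path adj s l' -> last s l' = t -> W s l <= W s l') ->
  (u, v) \notin links s l ->
  exists r1 r2, [/\ path adj s r1 /\ last s r1 = t, path adj s r2 /\ last s r2 = t,
    links s r1 :&: links s r2 \subset
      links s (a true ++ v :: c true) :&: links s (a false ++ v :: c false) :\ (u, v)
    & W s r1 + W s r2 <= W s (a true ++ v :: c true) + W s (a false ++ v :: c false)].
Proof.
move=> pl ll lmin el.
have Xs : X s by apply/existsP; exists true; rewrite mem_head.
have Yt : Y (last s l).
  have [_ _ _ lc] := halves_path true.
  by apply/existsP; exists true; rewrite ll -lc mem_last.
have [l1 [m [l3 [def_l /existsP [i xi] /existsP [j yj] hm]]]] := segment_between Xs Yt.
have [a' [a'' [ea xa']]] := split_at_mem xi.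
have [c' [c'' [ec yc']]] := split_at_mem yj.
subst l; have pm : path adj (last s l1) m by move: pl; rewrite !cat_path => /and3P [].
have le_m : W (last s l1) m <= W (last s l1) (a'' ++ v :: c').
  have [pd ld] := detour_walk ea ec; rewrite xa' in pd ld.
  have [pl' ll'] := path_splice (p2 := l3) (m' := m) pl pd (etrans ld yc').
  have := lmin _ pl'; rewrite ll' ll !walk_weight_cat3 ld yc' => /(_ erefl).
  by rewrite lerD2r lerD2l.
rewrite -xa' in pm le_m yc' hm.
have [pr1 lr1 links_r1 le_r1] := reroute_crossed ea ec pm (esym yc') le_m.
have [pr2 lr2] := crossed_walk (~~ i) (~~ j).
exists (a' ++ m ++ c''), (a (~~ i) ++ v :: c (~~ j)); split => //.
  rewrite !links_crossed (subset_trans (setISS links_r1 (subxx _))) //.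
  apply: (crossed_links_meet (A := fun b => links s (a b)) (C := fun b => links v (c b)))
    => [b | b | b]; first exact: halves_links_disjoint.
    exact: link_notin_halves.
  rewrite -links_crossed; apply: links_between_avoid_halves hm _.
  by apply: contra el => uvm; rewrite links_cat3 -xa' !in_setU uvm orbT.
by rewrite -(walk_weight_crossed_swap i j) lerD2r.
Qed.

End Crossing.

Lemma critical_link_bypass (R : numDomainType) (V : finType) (adj : rel V)
    (w : V * V -> R) (s t : V) (q1 q2 l : seq V) (e : V * V) :
  (forall x y, adj x y -> 0 <= w (x, y)) ->
  simple_path adj s t q1 -> simple_path adj s t q2 -> e \in critical s q1 q2 ->
  weight_shortest adj w s t l -> e \notin links s l ->
  exists r1 r2, [/\ simple_path adj s t r1, simple_path adj s t r2,
    critical s r1 r2 \subset critical s q1 q2 :\ e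
    & ct_weight w s r1 r2 <= ct_weight w s q1 q2].
Proof.
move=> w_ge0 sq1 sq2; case: e => u v; rewrite in_setI => /andP [e1 e2] hl el.
have [a1 la1 [c1 def_q1]] := links_split e1.
have [a2 la2 [c2 def_q2]] := links_split e2.
pose a b := if b then a1 else a2; pose c b := if b then c1 else c2.
have simple_halves b : simple_path adj s t (a b ++ v :: c b).
  by case: b; rewrite /= -?def_q1 -?def_q2.
have last_a b : last s (a b) = u by case: b.
have [/and3P [pl /eqP ll _] _] := hl.
have [r1 [r2 [[pr1 lr1] [pr2 lr2] crit le_r]]] :=
  crossing_bypass simple_halves last_a pl ll (shortest_walk w_ge0 hl) el.
have [r1' [pr1' lr1' ur1' sub1 le1]] := shortcut w_ge0 pr1.
have [r2' [pr2' lr2' ur2' sub2 le2]] := shortcut w_ge0 pr2.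
exists r1', r2'; split.
- by rewrite /simple_path pr1' lr1' lr1 eqxx.
- by rewrite /simple_path pr2' lr2' lr2 eqxx.
- by rewrite /critical def_q1 def_q2 (subset_trans (setISS sub1 sub2)).
rewrite /ct_weight !pweight_uniq //; last by case/and3P: sq1.
  by apply: le_trans (lerD le1 le2) _; move: le_r; rewrite /= -def_q1 -def_q2.
by case/and3P: sq2.
Qed.

Lemma prodr_lt_subset (R : numDomainType) (T : finType) (F : T -> R) (A B : {set T}) x :
  (forall y, y \in A -> 0 < F y <= 1) -> x \in A -> F x < 1 -> B \subset A :\ x ->
  \prod_(y in A) F y < \prod_(y in B) F y.
Proof.
move=> F01 xA Fx1 BAx; have BA : B \subset A := subset_trans BAx (subD1set _ _).
have xAB : x \in A :\: B.
  by rewrite in_setD xA andbT; apply/negP => /(subsetP BAx); rewrite !inE eqxx.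
rewrite (big_setID B) /= (setIidPr BA) gtr_pMr; last first.
  by apply: prodr_gt0 => y /(subsetP BA) /F01 /andP [].
rewrite (big_setD1 x xAB) /=; apply: le_lt_trans Fx1.
have /andP [/ltW Fx0 _] := F01 x xA; rewrite ler_piMr //.
apply: prodr_ile1 => y; rewrite !inE => /andP [_ /andP [_ yA]].
by have /andP [/ltW -> ->] := F01 y yA.
Qed.

Theorem theorem1 (R : realFieldType) (V : finType) (adj : rel V)
  (p w : V * V -> R) (pmax : R)
  (hpmax : pmax < 1)
  (hp : forall u v, adj u v -> 0 < p (u, v) /\ p (u, v) <= pmax)
  (hw : forall u v, adj u v -> 0 < w (u, v))
  (s t : V) (B : R) (q1 q2 : seq V) :
  ct_cqms_optimal adj p w s t B q1 q2 ->
  forall e, e \in critical s q1 q2 -> in_all_shortest adj w s t e.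
Proof.
move=> [[sq1 sq2 le_B] opt] e crit_e l hl; apply/idPn => el.
have w_ge0 x y : adj x y -> 0 <= w (x, y) by move/hw/ltW.
have [r1 [r2 [sr1 sr2 crit_r le_r]]] := critical_link_bypass w_ge0 sq1 sq2 crit_e hl el.
have surv_factor f : f \in critical s q1 q2 -> 0 < 1 - p f < 1.
  have /and3P [pq1 _ _] := sq1.
  case: f => x y; rewrite in_setI => /andP [/(links_path pq1) /hp [? ?] _].
  by apply/andP; split; lra.
have := opt r1 r2 (And3 sr1 sr2 (le_trans le_r le_B)); apply/negP; rewrite -ltNge.
apply: (prodr_lt_subset _ crit_e) crit_r => [f /surv_factor /andP [-> /ltW] //|].
by case/andP: (surv_factor e crit_e).
Qed.
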